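(* Let $n\ge 3$. The metric dimension of the power graph $P(G(n))$ of the gyrogroup $G(n)$ (defined in the context) is $\psi(P(G(n)))=2^n-3$.
   Context: Let $n\ge 3$ be an integer and $m=2^{n-1}$. Let $P(n)=\{0,1,\dots,m-1\}$, $H(n)=\{m,m+1,\dots,2^n-1\}$ and $G(n)=P(n)\cup H(n)$. For $i,j\in G(n)$ let $t,s,k\in P(n)$ be the residues modulo $m$ (taken in $\{0,\dots,m-1\}$) of $i+j$, $i+(\frac m2-1)j$ and $(\frac m2+1)i+(\frac m2-1)j$, respectively, and define $i\oplus j=t$ if $i,j\in P(n)$; $i\oplus j=t+m$ if $i\in P(n),j\in H(n)$; $i\oplus j=s+m$ if $i\in H(n),j\in P(n)$; $i\oplus j=k$ if $i,j\in H(n)$. Then $(G(n),\oplus)$ is a gyrogroup with identity $e=0$. Powers are defined by $a^1=a$, $a^{k+1}=a^k\oplus a$. The power graph $P(G(n))$ is the simple undirected graph with vertex set $G(n)$ in which distinct vertices $u,v$ are adjacent if and only if $u^k=v$ or $v^k=u$ for some positive integer $k$. For a connected graph $G$ and an ordered set $U=\{u_1,\dots,u_s\}\subseteq V(G)$, the representation of $v$ is $r(v|U)=(d(v,u_1),\dots,d(v,u_s))$; $U$ is a resolving set if distinct vertices have distinct representations. The metric dimension $\psi(G)$ is the minimum cardinality of a resolving set. *)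

From mathcomp Require Import all_boot.
From mathcomp Require Import boolp.
Set Implicit Arguments. Unset Strict Implicit. Unset Printing Implicit Defensive.

Definition gm (n : nat) : nat := 2 ^ n.-1.

Definition gop (n : nat) (i j : nat) : nat :=
  let m := gm n in
  let t := (i + j) %% m in
  let s := (i + (m %/ 2 - 1) * j) %% m in
  let k := ((m %/ 2 + 1) * i + (m %/ 2 - 1) * j) %% m in
  if i < m then (if j < m then t else t + m)
  else (if j < m then s + m else k).

(* a^1 = a, a^(k+1) = a^k (+) a ; the value at k = 0 is never used *)
Fixpoint gpow (n : nat) (a : nat) (k : nat) : nat :=
  match k with
  | 0 => 0
  | 1 => a
  | k'.+1 => gop n (gpow n a k') a
  end.

Section Graph.
Variable T : finType.
Variable adj : T -> T -> Prop.

Fixpoint walk (k : nat) (u v : T) : Prop :=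
  match k with
  | 0 => u = v
  | k'.+1 => exists w, adj u w /\ walk k' w v
  end.

(* graph distance: length of a shortest walk (0 if unreachable; irrelevant
   for connected graphs) *)
Definition gdist (u v : T) : nat :=
  match pselect (exists k, `[< walk k u v >]) with
  | left H => ex_minn H
  | right _ => 0
  end.

Definition resolving (U : {set T}) : Prop :=
  forall v w : T, (forall u, u \in U -> gdist v u = gdist w u) -> v = w.

Definition is_metric_dimension (d : nat) : Prop :=
  (exists U : {set T}, resolving U /\ #|U| = d) /\
  (forall U : {set T}, resolving U -> d <= #|U|).
End Graph.

Definition power_adj (n : nat) (u v : 'I_(2 ^ n)) : Prop :=
  u <> v /\ exists k, 0 < k /\
    (gpow n (val u) k = val v \/ gpow n (val v) k = val u).

From mathcomp Require Import all_boot.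
From mathcomp Require Import boolp zify.

Set Implicit Arguments.
Unset Strict Implicit.
Unset Printing Implicit Defensive.

(* Write m = 2^(n-1), P = [0, m) and H = [m, 2m).  On P the operation is
   addition modulo m, so powers of a in P are the multiples k a mod m; since
   the divisors of 2^(n-1) form a chain, one of any two elements of Z_m is a
   multiple of the other and P is a clique.  Every a in H satisfies
   a (+) a = 0, so its powers are a and 0 only.  Hence 0 is a universal
   vertex, the other vertices of P are pairwise twins, and so are the vertices
   of H.  A resolving set misses at most one vertex of each twin class, giving
   at least (m - 2) + (m - 1) = 2^n - 3 vertices, and the complement of
   {0, 1, m} is resolving, as 2 and m + 1 already separate 0, 1 and m. *)

Section Resolving.
Variables (T : finType) (adj : T -> T -> Prop).

Lemma gdist_eq u v d :
  walk adj d u v -> (forall k, k < d -> ~ walk adj k u v) -> gdist adj u v = d.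
Proof.
move=> wd dmin; rewrite /gdist; case: pselect => [ex|nex]; last first.
  by case: nex; exists d; apply/asboolP.
case: ex_minnP => k /asboolP wk kmin.
have /kmin le_dk : `[< walk adj d u v >] by apply/asboolP.
by case: ltngtP le_dk => // lt_kd; case: (dmin k lt_kd).
Qed.

Definition twins (x y : T) : Prop :=
  forall u, u != x -> u != y -> gdist adj x u = gdist adj y u.

Lemma resolving_twins U x y :
  resolving adj U -> twins x y -> x \notin U -> y \notin U -> x = y.
Proof.
move=> resU xy xU yU; apply: resU => u uU; apply: xy.
  by apply: contraNneq xU => <-.
by apply: contraNneq yU => <-.
Qed.

Lemma card_twin_class_resolving U (A : {set T}) :
  resolving adj U -> {in A &, forall x y, twins x y} -> #|A| <= #|A :&: U| + 1.
Proof.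
move=> resU twA; rewrite -(cardsID U A) leq_add2l.
apply/card_le1_eqP => x y /setDP [xA xU] /setDP [yA yU].
exact: resolving_twins resU (twA y x yA xA) yU xU.
Qed.
End Resolving.

Section UniversalVertex.
Variables (T : finType) (adj : T -> T -> Prop) (c : T).
Hypothesis adj_c : forall x, x != c -> adj x c /\ adj c x.

Lemma gdist_universal u v :
  gdist adj u v = if u == v then 0 else if `[< adj u v >] then 1 else 2.
Proof.
case: eqP => [-> | neq_uv]; first exact: gdist_eq.
case: asboolP => [uv | not_uv].
  by apply: gdist_eq => [|[|k] //]; first by exists v.
have uc : u != c.
  apply/eqP => uc; apply: not_uv; rewrite uc.
  have vc : v != c by apply/eqP => vc; apply: neq_uv; rewrite uc vc.
  by case: (adj_c vc).
have vc : v != c.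
  apply/eqP => vc; apply: not_uv; rewrite vc.
  have uc' : u != c by apply/eqP => uc'; apply: neq_uv; rewrite uc' vc.
  by case: (adj_c uc').
apply: gdist_eq => [|[|[|k]] //].
  exists c; split; first by case: (adj_c uc).
  by exists v; split => //; case: (adj_c vc).
by move=> _ [w [uw wv]]; apply: not_uv; rewrite -wv.
Qed.

Lemma gdist_eq0 u v : gdist adj u v = 0 -> u = v.
Proof. by rewrite gdist_universal; case: eqP => // _; case: ifP. Qed.

Lemma resolving_outside (U : {set T}) :
  (forall v w, v \notin U -> w \notin U ->
     (forall u, u \in U -> gdist adj v u = gdist adj w u) -> v = w) ->
  resolving adj U.
Proof.
move=> sepU v w vw; have [vU | vU] := boolP (v \in U).
  by apply/esym/gdist_eq0; rewrite -vw // gdist_universal eqxx.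
have [wU | wU] := boolP (w \in U).
  by apply/gdist_eq0; rewrite vw // gdist_universal eqxx.
exact: sepU.
Qed.
End UniversalVertex.

Lemma modn_mul_reach m u v :
  0 < m -> gcdn u m %| v -> exists2 k, 0 < k & k * u = v %[mod m].
Proof.
move=> m_gt0; have [-> | u_gt0] := posnP u.
  by rewrite gcd0n => /eqP v_mod; exists 1; rewrite // muln0 mod0n.
move=> gcd_v; have [km kn def_g _] := egcdnP m u_gt0.
have [q def_v] := dvdnP gcd_v.
exists (km * q + m); first by rewrite addn_gt0 m_gt0 orbT.
rewrite mulnDl mulnAC def_g mulnDl mulnAC [gcdn u m * q]mulnC -def_v.
by rewrite addnAC (mulnC m u) -mulnDl modnMDl.
Qed.

Lemma dvdn_pfactor_total p N d e :
  prime p -> d %| p ^ N -> e %| p ^ N -> (d %| e) || (e %| d).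
Proof.
move=> p_pr /(dvdn_pfactor _ _ p_pr) [i _ ->] /(dvdn_pfactor _ _ p_pr) [j _ ->].
by rewrite !dvdn_Pexp2l ?prime_gt1 ?leq_total.
Qed.

Lemma prime_power_mul_reach p N u v : prime p ->
  exists2 k, 0 < k & k * u = v %[mod p ^ N] \/ k * v = u %[mod p ^ N].
Proof.
move=> p_pr; have pN_gt0 : 0 < p ^ N by rewrite expn_gt0 prime_gt0.
have /orP [gu_gv | gv_gu] :=
  dvdn_pfactor_total p_pr (dvdn_gcdr u (p ^ N)) (dvdn_gcdr v (p ^ N)).
  have [k k_gt0 ku] := modn_mul_reach pN_gt0 (dvdn_trans gu_gv (dvdn_gcdl v _)).
  by exists k; [|left].
have [k k_gt0 kv] := modn_mul_reach pN_gt0 (dvdn_trans gv_gu (dvdn_gcdl u _)).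
by exists k; [|right].
Qed.

Section Gyrogroup.
Variable n : nat.
Hypothesis n_gt1 : 1 < n.
Local Notation m := (gm n).

Lemma gm_gt0 : 0 < m.
Proof. by rewrite expn_gt0. Qed.

Lemma expn_gm : 2 ^ n = m + m.
Proof. by rewrite addnn -mul2n -expnS prednK // ltnW. Qed.

Lemma gm_halves : (m %/ 2 + 1) + (m %/ 2 - 1) = m.
Proof.
rewrite /gm -[n.-1](@prednK n.-1) ?expnS ?mulKn //; last by rewrite -subn1 subn_gt0.
have : 0 < 2 ^ n.-2 by rewrite expn_gt0.
lia.
Qed.

Lemma gop_PP i j : i < m -> j < m -> gop n i j = (i + j) %% m.
Proof. by move=> im jm; rewrite /gop im jm. Qed.

Lemma gop_HH a : m <= a -> gop n a a = 0.
Proof. by move=> ma; rewrite /gop ltnNge ma /= -mulnDl gm_halves modnMr. Qed.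

Lemma gop_0H a : m <= a < m + m -> gop n 0 a = a.
Proof.
case/andP=> ma am2; rewrite /gop gm_gt0 ltnNge ma /= add0n.
by rewrite -{1}(subnK ma) modnDr modn_small ?subnK // ltn_subLR.
Qed.

Lemma gpowS a k : 0 < k -> gpow n a k.+1 = gop n (gpow n a k) a.
Proof. by case: k. Qed.

Lemma gpow_P a k : a < m -> 0 < k -> gpow n a k = (k * a) %% m.
Proof.
move=> am; elim: k => [//|[|k] IH _]; first by rewrite mul1n modn_small.
rewrite gpowS // gop_PP ?IH ?ltn_pmod ?gm_gt0 //.
by rewrite modnDml mulSn addnC.
Qed.

Lemma gpow_ltm a k : a < m -> gpow n a k < m.
Proof. by case: k => [|k] am; [exact: gm_gt0 | rewrite gpow_P ?ltn_pmod ?gm_gt0]. Qed.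

Lemma gpow_H a k : m <= a < m + m -> gpow n a k = if odd k then a else 0.
Proof.
move=> aH; elim: k => [|[|k] IH] //; rewrite gpowS // IH /=.
by case: odd => /=; [apply: gop_0H | apply: gop_HH; case/andP: aH].
Qed.

Lemma gpow_order a : a < 2 ^ n -> gpow n a (2 ^ n) = 0.
Proof.
rewrite expn_gm => a2m; have [am | ma] := ltnP a m.
  by rewrite gpow_P ?addn_gt0 ?gm_gt0 // mulnDl -modnDml modnMr add0n modnMr.
by rewrite gpow_H ?ma // addnn odd_double.
Qed.

Definition power_adjb (x y : nat) : bool :=
  (x != y) && [|| (x < m) && (y < m), x == 0 | y == 0].

Lemma power_adjbC x y : power_adjb x y = power_adjb y x.
Proof. by rewrite /power_adjb eq_sym [(x < m) && _]andbC [(x == 0) || _]orbC. Qed.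

Lemma power_adjb_gpow a k :
  a < 2 ^ n -> gpow n a k != a -> power_adjb a (gpow n a k).
Proof.
move=> a2n neq; rewrite /power_adjb eq_sym neq /=.
have [am | ma] := ltnP a m; first by rewrite gpow_ltm.
by move: neq; rewrite gpow_H ?ma -?expn_gm //; case: (odd k); rewrite ?eqxx ?orbT.
Qed.

Lemma power_adjb_reach u v : u < 2 ^ n -> v < 2 ^ n -> power_adjb u v ->
  exists k, 0 < k /\ (gpow n u k = v \/ gpow n v k = u).
Proof.
move=> u2n v2n /andP [_ /or3P [/andP [um vm] | /eqP u0 | /eqP v0]].
- have [k k_gt0 uv] := prime_power_mul_reach n.-1 u v (isT : prime 2).
  exists k; split; rewrite // !gpow_P //.
  by case: uv => [uv | vu]; [left; rewrite uv | right; rewrite vu]; rewrite modn_small.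
- by exists (2 ^ n); split; [rewrite expn_gt0 | right; rewrite gpow_order].
- by exists (2 ^ n); split; [rewrite expn_gt0 | left; rewrite gpow_order].
Qed.

Lemma power_adjE (u v : 'I_(2 ^ n)) : power_adj u v <-> power_adjb u v.
Proof.
split=> [[neq_uv [k [_ [uv | vu]]]] | uv].
- by rewrite -uv power_adjb_gpow // uv eq_sym val_eqE; apply/eqP.
- by rewrite power_adjbC -vu power_adjb_gpow // vu val_eqE; apply/eqP.
split; first by move=> eq_uv; move: uv; rewrite /power_adjb eq_uv eqxx.
exact: power_adjb_reach (ltn_ord u) (ltn_ord v) uv.
Qed.

Lemma power_adj_identity (z : 'I_(2 ^ n)) :
  val z = 0 -> forall x, x != z -> power_adj x z /\ power_adj z x.
Proof.
move=> z0 x; rewrite -val_eqE z0 => x0.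
by split; rewrite power_adjE /power_adjb z0 !orbT andbT // eq_sym.
Qed.

Lemma gdist_power_graph (u v : 'I_(2 ^ n)) :
  gdist (@power_adj n) u v = if u == v then 0 else if power_adjb u v then 1 else 2.
Proof.
have n0 : 0 < 2 ^ n by rewrite expn_gt0.
rewrite (gdist_universal (power_adj_identity (z := Ordinal n0) erefl)).
by rewrite (asbool_equiv_eq (power_adjE u v)) asboolb.
Qed.

Lemma power_adjb_twins (x y u : nat) : u != x -> u != y ->
  (0 < x < m) && (0 < y < m) || (m <= x) && (m <= y) ->
  power_adjb x u = power_adjb y u.
Proof. by have := gm_gt0; rewrite /power_adjb; lia. Qed.

Lemma twins_power_graph (x y : 'I_(2 ^ n)) :
  (0 < x < m) && (0 < y < m) || (m <= x) && (m <= y) -> twins (@power_adj n) x y.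
Proof.
move=> same u ux uy; rewrite !gdist_power_graph ![_ == u]eq_sym (negbTE ux) (negbTE uy).
by rewrite (@power_adjb_twins x y u).
Qed.

Lemma card_resolving_power_graph (U : {set 'I_(2 ^ n)}) :
  resolving (@power_adj n) U -> 2 ^ n - 3 <= #|U|.
Proof.
move=> resU; have m_gt0 := gm_gt0.
pose A := [set x : 'I_(2 ^ n) | 0 < x < m]; pose B := [set x : 'I_(2 ^ n) | m <= x].
have twinsA : #|A| <= #|A :&: U| + 1.
  apply: card_twin_class_resolving resU _ => x y; rewrite !inE => xA yA.
  by apply: twins_power_graph; rewrite xA yA.
have twinsB : #|B| <= #|B :&: U| + 1.
  apply: card_twin_class_resolving resU _ => x y; rewrite !inE => xB yB.
  by apply: twins_power_graph; rewrite xB yB orbT.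
have n0 : 0 < 2 ^ n by rewrite expn_gt0.
have cardAB : #|A| + #|B| = (2 ^ n).-1.
  have AB0 : A :&: B = set0 by apply/setP => x; rewrite !inE; apply/negbTE; lia.
  have AB : A :|: B = [set~ Ordinal n0].
    by apply/setP => x; rewrite !inE -val_eqE /=; apply/idP/idP; lia.
  by rewrite -cardsUI AB0 AB cards0 addn0 cardsC1 card_ord.
have cardU : #|A :&: U| + #|B :&: U| <= #|U|.
  rewrite -(cardsID A U) setIC leq_add2l; apply: subset_leq_card.
  by apply/subsetP => x; rewrite !inE => /andP [xB ->]; rewrite andbT; lia.
lia.
Qed.

Lemma gm_gt2 : 2 < n -> 2 < m.
Proof.
by move=> n_gt2; apply: leq_trans (_ : 2 ^ 2 <= m) => //; rewrite leq_exp2l //; lia.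
Qed.

Lemma power_adjb_separates (x y : nat) : 2 < m ->
  x \in [:: 0; 1; m] -> y \in [:: 0; 1; m] ->
  power_adjb x 2 = power_adjb y 2 -> power_adjb x m.+1 = power_adjb y m.+1 -> x = y.
Proof.
rewrite !inE => m_gt2 /or3P [] /eqP -> /or3P [] /eqP -> //; rewrite /power_adjb; lia.
Qed.

Lemma power_adjb_gdist (x y u : 'I_(2 ^ n)) : u != x -> u != y ->
  gdist (@power_adj n) x u = gdist (@power_adj n) y u -> power_adjb x u = power_adjb y u.
Proof.
rewrite !gdist_power_graph ![_ == u]eq_sym => /negbTE -> /negbTE ->.
by do 2 case: power_adjb.
Qed.

Lemma exists_resolving_power_graph : 2 < n ->
  exists U : {set 'I_(2 ^ n)}, resolving (@power_adj n) U /\ #|U| = 2 ^ n - 3.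
Proof.
move=> n_gt2; have m_gt2 := gm_gt2 n_gt2.
have vertex k : k < m + m -> k < 2 ^ n by rewrite expn_gm.
have [h0 h1 hm] : [/\ 0 < m + m, 1 < m + m & m < m + m] by split; lia.
pose S := [set Ordinal (vertex _ h0); Ordinal (vertex _ h1); Ordinal (vertex _ hm)].
exists (~: S); split; last first.
  have cardS : #|S| = 3.
    by rewrite /S setUC cardsU1 cards2 !inE -!val_eqE /= !gtn_eqF // (ltn_trans _ m_gt2).
  by have := cardsC S; rewrite card_ord cardS => /(congr1 (subn^~ 3)); rewrite addKn.
apply: (resolving_outside (power_adj_identity (z := Ordinal (vertex _ h0)) erefl)).
move=> v w; rewrite !inE !negbK -!val_eqE /= => vS wS sep.
have sepb k (hk : k < m + m) : k \notin [:: 0; 1; m] -> power_adjb v k = power_adjb w k.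
  move=> kS; apply: (@power_adjb_gdist v w (Ordinal (vertex k hk))).
  - by rewrite -val_eqE /=; move: vS kS; rewrite !inE; lia.
  - by rewrite -val_eqE /=; move: wS kS; rewrite !inE; lia.
  - by apply: sep; move: kS; rewrite !inE -!val_eqE /= orbA.
apply: val_inj; apply: (power_adjb_separates m_gt2); rewrite ?sepb ?inE ?orbA //; lia.
Qed.

End Gyrogroup.

Theorem mainTheorem6 (n : nat) (hn : 3 <= n) :
  is_metric_dimension (@power_adj n) (2 ^ n - 3).
Proof.
have n_gt1 : 1 < n by apply: ltnW.
split; first exact: exists_resolving_power_graph.
by move=> U; apply: card_resolving_power_graph.
Qed.
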